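(* Let $\boldsymbol{u}^\star\in\mathbb{R}^n\setminus\{\boldsymbol{0}\}$ and $f(\boldsymbol{u})=\frac12\|\boldsymbol{u}\boldsymbol{u}^{\mathrm T}-\boldsymbol{u}^\star{\boldsymbol{u}^\star}^{\mathrm T}\|_1$ on $\mathbb{R}^n$. Then for any spurious stationary point $\boldsymbol{u}$ of $f$, and for $\boldsymbol{w}=\boldsymbol{u}^\star-\boldsymbol{u}$ as well as for $\boldsymbol{w}=-\boldsymbol{u}^\star-\boldsymbol{u}$, $$d^2f(\boldsymbol{u};\boldsymbol{0})(\boldsymbol{w})=-\|\boldsymbol{u}^\star\|_1^2<0.$$
   Context: $\|\cdot\|_1$ is the entrywise $\ell_1$-norm. For $g:\mathbb{R}^n\to\mathbb{R}$ and $\boldsymbol{x},\boldsymbol{v},\boldsymbol{w}\in\mathbb{R}^n$, the second subderivative is $d^2g(\boldsymbol{x};\boldsymbol{v})(\boldsymbol{w})=\liminf_{t\searrow0,\ \boldsymbol{w}'\to\boldsymbol{w}}\frac{g(\boldsymbol{x}+t\boldsymbol{w}')-g(\boldsymbol{x})-t\,\boldsymbol{v}^{\mathrm T}\boldsymbol{w}'}{t^2/2}$. A point $\boldsymbol{u}$ is stationary if $\boldsymbol{0}\in\partial f(\boldsymbol{u})$, where $\partial f(\boldsymbol{u})=\{\boldsymbol{Z}\boldsymbol{u}:\boldsymbol{Z}\text{ symmetric}, \boldsymbol{Z}\in\operatorname{Sign}(\boldsymbol{u}\boldsymbol{u}^{\mathrm T}-\boldsymbol{u}^\star{\boldsymbol{u}^\star}^{\mathrm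 T})\}$ (entrywise set-valued sign, $\operatorname{Sign}(0)=[-1,1]$) is the (Fréchet = limiting = Clarke) subdifferential; it is spurious if additionally $\boldsymbol{u}\notin\{\boldsymbol{u}^\star,-\boldsymbol{u}^\star\}$. *)

From HB Require Import structures.
From mathcomp Require Import all_boot all_order all_algebra.
From mathcomp Require Import all_classical all_reals.
From mathcomp Require Import ereal.
Set Implicit Arguments. Unset Strict Implicit. Unset Printing Implicit Defensive.
Import Order.TTheory GRing.Theory Num.Theory.
Local Open Scope ring_scope.
Local Open Scope classical_set_scope.

Definition l1norm (R : realType) (m k : nat) (A : 'M[R]_(m, k)) : R :=
  \sum_(i < m) \sum_(j < k) `|A i j|.

Definition fobj (R : realType) (n : nat) (us u : 'cV[R]_n) : R :=
  2^-1 * l1norm (u *m u^T - us *m us^T).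

Definition Sign (R : realType) (r : R) : set R :=
  [set z | (0 < r -> z = 1) /\ (r < 0 -> z = -1) /\ (r = 0 -> -1 <= z <= 1)].

Definition subdiff (R : realType) (n : nat) (us u : 'cV[R]_n) : set 'cV[R]_n :=
  [set Z *m u | Z in [set Z : 'M[R]_n | Z^T = Z /\
     forall i j, Sign ((u *m u^T - us *m us^T) i j) (Z i j)]].

Definition stationary (R : realType) (n : nat) (us u : 'cV[R]_n) : Prop :=
  subdiff us u 0.

Definition spurious_stationary (R : realType) (n : nat) (us u : 'cV[R]_n) : Prop :=
  stationary us u /\ u <> us /\ u <> - us.

(* second subderivative
   d^2 g(x;v)(w) = liminf_{t \searrow 0, w' -> w} (g(x+t w') - g x - t v^T w')/(t^2/2),
   the liminf written out as sup over delta>0 of inf over the punctured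
   neighbourhood 0 < t < delta, |w'_i - w_i| < delta (sup-norm ball). *)
Definition second_subderiv (R : realType) (n : nat) (g : 'cV[R]_n -> R)
    (x v w : 'cV[R]_n) : \bar R :=
  ereal_sup [set ereal_inf
      [set ((g (x + tw.1 *: tw.2) - g x - tw.1 * (v^T *m tw.2) 0 0)
             / (tw.1 ^+ 2 / 2))%:E
        | tw in [set tw : R * 'cV[R]_n | 0 < tw.1 < d /\
                   forall i, `|tw.2 i 0 - w i 0| < d]]
    | d in [set d : R | 0 < d]].

From HB Require Import structures.
From mathcomp Require Import all_boot all_order all_algebra.
From mathcomp Require Import all_classical all_reals.
From mathcomp Require Import ereal.
From mathcomp Require Import ring lra.
Import Order.TTheory GRing.Theory Num.Theory.
Local Open Scope ring_scope.

(* A stationary point comes with a symmetric Z, entrywise in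
   Sign(u u^T - us us^T), such that Z u = 0.  On the support of us, the ratios
   x_i = u_i / us_i and the rescaled signs Y_ij = Z_ij sg(us_i) sg(us_j) satisfy
   Y_ij in Sign(x_i x_j - 1), and the rows of Y are balanced:
   sum_j Y_ij x_j |us_j| = 0.  Since Sign is monotone, x_b < x_a implies
   Y_aj x_j >= Y_bj x_j for every j, so balance forces equality term by term.
   Applied to the largest and smallest ratio this gives x <= 1, and x >= -1 by
   the symmetry x -> -x; then Y = -1 unless x = 1 or x = -1, i.e. unless
   u = us or u = -us.  Hence Z_ij us_i us_j = -|us_i us_j| and |u_i| <= |us_i|.

   With Q(c) = c^T Z c, the bound |Z| <= 1 gives 2 f(v) >= Q(v) - Q(us), with
   equality as soon as |v| <= |us| entrywise; moreover Q(us) = -|us|_1^2 and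
   Q(u + c) = Q(c) because Z u = 0.  On the segment from u to +-us the
   second-order difference quotient is therefore exactly -|us|_1^2, while for
   directions within d of w it is at least -(|us|_1 + n d)^2. *)

Section SignSet.
Context {R : realType}.
Implicit Types r s z : R.

Lemma Sign_gt0 {r z} : Sign r z -> 0 < r -> z = 1.
Proof. by case. Qed.

Lemma Sign_lt0 {r z} : Sign r z -> r < 0 -> z = -1.
Proof. by case=> _ []. Qed.

Lemma Sign_norm_le1 {r z} : Sign r z -> `|z| <= 1.
Proof.
case=> zpos [zneg zeq0]; rewrite ler_norml.
have [r0|r0|r0] := ltgtP r 0; last exact: zeq0.
- by rewrite zneg //; apply/andP; split; lra.
- by rewrite zpos //; apply/andP; split; lra.
Qed.

Lemma Sign_mulr {r z} : Sign r z -> z * r = `|r|.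
Proof.
case=> zpos [zneg _]; have [r0|r0|->] := ltgtP r 0.
- by rewrite zneg // ltr0_norm // mulN1r.
- by rewrite zpos // gtr0_norm // mul1r.
- by rewrite mulr0 normr0.
Qed.

Lemma Sign1_ge0 {r} : Sign r 1 -> 0 <= r.
Proof. by move=> S1; rewrite leNgt; apply/negP => /(Sign_lt0 S1); lra. Qed.

Lemma SignN1_le0 {r} : Sign r (-1) -> r <= 0.
Proof. by move=> SN1; rewrite leNgt; apply/negP => /(Sign_gt0 SN1); lra. Qed.

Lemma Sign_le r s zr zs : r < s -> Sign r zr -> Sign s zs -> zr <= zs.
Proof.
move=> rs Sr Ss; have := Sign_norm_le1 Sr; have := Sign_norm_le1 Ss.
rewrite !ler_norml => /andP[zs_ge _] /andP[_ zr_le].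
have [r0|r0] := ltP r 0; first by rewrite (Sign_lt0 Sr r0).
by rewrite (Sign_gt0 Ss) //; apply: le_lt_trans rs.
Qed.

Lemma Sign_mulr_le (a b y za zb : R) : b < a ->
  Sign (a * y - 1) za -> Sign (b * y - 1) zb -> zb * y <= za * y.
Proof.
move=> ba Sa Sb; have [y0|y0|->] := ltgtP y 0; last by rewrite !mulr0.
- have ab : a * y - 1 < b * y - 1 by rewrite ltrD2r ltr_nM2r.
  by rewrite ler_nM2r //; apply: Sign_le ab Sa Sb.
- have ba' : b * y - 1 < a * y - 1 by rewrite ltrD2r ltr_pM2r.
  by rewrite ler_pM2r //; apply: Sign_le ba' Sb Sa.
Qed.

Lemma Sign_mulr_sg (c : R) r z : c != 0 -> Sign (c * r) z -> Sign r (z * Num.sg c).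
Proof.
move=> c0 [zpos [zneg zeq0]]; case/orP: (lt_total c0) => [cneg|cpos].
- rewrite ltr0_sg // mulrN1; split; [|split].
  + by move=> r0; rewrite zneg ?opprK // nmulr_rlt0.
  + by move=> r0; rewrite zpos // nmulr_rgt0.
  + move=> r0; have /zeq0 : c * r = 0 by rewrite r0 mulr0.
    by case/andP=> z_ge z_le; apply/andP; split; lra.
- rewrite gtr0_sg // mulr1; split; [|split].
  + by move=> r0; rewrite zpos // mulr_gt0.
  + by move=> r0; rewrite zneg // pmulr_rlt0.
  + by move=> r0; apply: zeq0; rewrite r0 mulr0.
Qed.

End SignSet.

Section BalancedSignPattern.
Context {R : realType} {T : finType} (P : pred T) (p : T -> R) (Y : T -> T -> R).
Hypothesis p_gt0 : forall {i}, P i -> 0 < p i.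
Hypothesis Ysym : forall i j, Y i j = Y j i.

Definition sign_compatible (x : T -> R) :=
  forall i j, P i -> P j -> Sign (x i * x j - 1) (Y i j).

Definition balanced_rows (x : T -> R) :=
  forall i, P i -> \sum_(j | P j) Y i j * (x j * p j) = 0.

Lemma sign_compatibleN {x} : sign_compatible x -> sign_compatible (fun i => - x i).
Proof. by move=> xS i j Pi Pj; rewrite mulrNN; exact: xS. Qed.

Lemma balanced_rowsN {x} : balanced_rows x -> balanced_rows (fun i => - x i).
Proof.
move=> xrow i Pi; apply/eqP; rewrite -oppr_eq0 -sumrN -[X in _ == X](xrow _ Pi).
by apply/eqP/eq_bigr => j _; rewrite mulNr mulrN opprK.
Qed.

Section OneSolution.
Context {x : T -> R}.
Hypotheses (xS : sign_compatible x) (xrow : balanced_rows x).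

Lemma balanced_rows_eq {a b j} : P a -> P b -> P j -> x b < x a ->
  Y a j * x j = Y b j * x j.
Proof.
move=> Pa Pb Pj ba.
have le_ab k : P k -> 0 <= (Y a k * x k - Y b k * x k) * p k.
  move=> Pk; rewrite mulr_ge0 ?subr_ge0 ?(ltW (p_gt0 Pk)) //.
  exact: Sign_mulr_le ba (xS _ _ Pa Pk) (xS _ _ Pb Pk).
have sum0 : \sum_(k | P k) (Y a k * x k - Y b k * x k) * p k = 0.
  rewrite (eq_bigr (fun k => Y a k * (x k * p k) - Y b k * (x k * p k))).
    by rewrite sumrB (xrow _ Pa) (xrow _ Pb) subrr.
  by move=> k _; ring.
have /eqP := psumr_eq0P le_ab sum0 Pj.
by rewrite mulf_eq0 (gt_eqF (p_gt0 Pj)) orbF subr_eq0 => /eqP.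
Qed.

Lemma balanced_le1 i : P i -> x i <= 1.
Proof.
move=> Pi; case: (arg_maxP x Pi) => i1 Pi1 le_max.
case: (arg_minP x Pi) => i2 Pi2 ge_min.
apply: le_trans (le_max _ Pi) _; rewrite leNgt; apply/negP => max_gt1.
have min_ge1 : 1 <= x i2.
  have [lt_min_max|] := ltP (x i2) (x i1); last by lra.
  have Y11 : Y i1 i1 = 1 by apply: (Sign_gt0 (xS _ _ Pi1 Pi1)); nra.
  have Y21 : Y i2 i1 = 1.
    have max_neq0 : x i1 != 0 by rewrite gt_eqF //; lra.
    have := balanced_rows_eq Pi1 Pi2 Pi1 lt_min_max.
    by rewrite Y11 => /(mulIf max_neq0)/esym.
  have := xS _ _ Pi2 Pi1; rewrite Y21 => /Sign1_ge0 prod_ge1.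
  have Y22 : Y i2 i2 = 1.
    have min_neq0 : x i2 != 0 by apply/eqP => min0; move: prod_ge1; rewrite min0; lra.
    have := balanced_rows_eq Pi1 Pi2 Pi2 lt_min_max.
    by rewrite Ysym Y21 => /(mulIf min_neq0)/esym.
  by have := xS _ _ Pi2 Pi2; rewrite Y22 => /Sign1_ge0; nra.
have /eqP := xrow _ Pi1; apply/negP; rewrite psumr_neq0.
- apply/hasP; exists i; rewrite ?mem_index_enum // Pi /=.
  have xi_ge1 : 1 <= x i by apply: le_trans (ge_min _ Pi).
  by rewrite (Sign_gt0 (xS _ _ Pi1 Pi)) ?mul1r ?mulr_gt0 ?p_gt0 //; nra.
- move=> j Pj; have xj_ge1 : 1 <= x j by apply: le_trans (ge_min _ Pj).
  by rewrite (Sign_gt0 (xS _ _ Pi1 Pj)) ?mul1r ?mulr_ge0 ?(ltW (p_gt0 Pj)) //; nra.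
Qed.

Lemma balanced_Y_at1 {i j} : P i -> P j -> x i = 1 -> x j = 1 ->
  ~ (forall k, P k -> x k = 1) -> Y i j = -1.
Proof.
move=> Pi Pj xi1 xj1 not_all1.
have [k Pk xk_lt1] : exists2 k, P k & x k < 1.
  apply: contra_notP not_all1 => no_lt1 k Pk; apply/eqP.
  rewrite eq_le balanced_le1 //= leNgt; apply/negP => xk_lt1.
  by apply: no_lt1; exists k.
have Ykj : Y k j = -1 by apply: (Sign_lt0 (xS _ _ Pk Pj)); rewrite xj1; lra.
have := balanced_rows_eq Pi Pk Pj; rewrite xi1 Ykj xj1 !mulr1; exact.
Qed.

End OneSolution.

Lemma balanced_Y_eqN1 x : sign_compatible x -> balanced_rows x ->
  ~ (forall i, P i -> x i = 1) -> ~ (forall i, P i -> x i = -1) ->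
  forall i j, P i -> P j -> Y i j = -1.
Proof.
move=> xS xrow not_all1 not_allN1 i j Pi Pj.
have [xij_lt1|xij_ge1] := ltP (x i * x j - 1) 0; first exact: (Sign_lt0 (xS _ _ Pi Pj)).
have xS' := sign_compatibleN xS; have xrow' := balanced_rowsN xrow.
have le1 k : P k -> -1 <= x k <= 1.
  by move=> Pk; rewrite balanced_le1 // andbT lerNl; apply: balanced_le1 xS' xrow' _ Pk.
have /andP[xi_ge xi_le] := le1 i Pi; have /andP[xj_ge xj_le] := le1 j Pj.
have [[xi1 xj1]|[xi1 xj1]] : (x i = 1 /\ x j = 1) \/ (x i = -1 /\ x j = -1).
  by have [xj0|xj0] := leP 0 (x j); [left|right]; split; nra.
- exact: (balanced_Y_at1 xS xrow Pi Pj xi1 xj1 not_all1).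
- apply: (balanced_Y_at1 xS' xrow' Pi Pj); rewrite ?xi1 ?xj1 ?opprK //.
  by move=> all1; apply: not_allN1 => k /all1 /eqP; rewrite eqr_oppLR => /eqP.
Qed.

End BalancedSignPattern.

Section QuadraticForm.
Context {R : comPzRingType} {n : nat}.
Implicit Types (Z : 'M[R]_n) (b c : 'cV[R]_n).

Definition qform Z c : R := (c^T *m Z *m c) 0 0.

Lemma outer_diffE b c i j :
  (b *m b^T - c *m c^T) i j = b i 0 * b j 0 - c i 0 * c j 0.
Proof. by rewrite !mxE !big_ord1 !mxE. Qed.

Lemma qformE Z c : qform Z c = \sum_i \sum_j Z i j * (c i 0 * c j 0).
Proof.
rewrite /qform mxE (eq_bigr (fun j => \sum_i c i 0 * Z i j * c j 0)); last first.
  by move=> j _; rewrite mxE mulr_suml; apply: eq_bigr => i _; rewrite mxE.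
rewrite exchange_big; apply: eq_bigr => i _; apply: eq_bigr => j _; ring.
Qed.

Lemma qformZ Z t c : qform Z (t *: c) = t ^+ 2 * qform Z c.
Proof. by rewrite /qform !linearZ /= -!scalemxAl !mxE expr2 mulrA. Qed.

Lemma qform_ker Z b : Z *m b = 0 -> qform Z b = 0.
Proof. by move=> Zb; rewrite /qform -mulmxA Zb mulmx0 mxE. Qed.

Lemma qform_shift Z b c : Z^T = Z -> Z *m b = 0 -> qform Z (b + c) = qform Z c.
Proof.
move=> Zsym Zb; have bZ : b^T *m Z = 0 by rewrite -Zsym -trmx_mul Zb trmx0.
rewrite /qform !linearD /= -[_ *m Z *m b]mulmxA Zb mulmx0 add0r.
by rewrite !mulmxDl bZ !mul0mx add0r.
Qed.

End QuadraticForm.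

Section Objective.
Context {R : realType} {n : nat}.
Implicit Types (Z : 'M[R]_n) (c us v : 'cV[R]_n).

Lemma l1norm_col c : l1norm c = \sum_i `|c i 0|.
Proof. by apply: eq_bigr => i _; rewrite big_ord1. Qed.

Lemma l1norm_ge0 c : 0 <= l1norm c.
Proof. by rewrite l1norm_col sumr_ge0. Qed.

Lemma l1norm_gt0 c : c != 0 -> 0 < l1norm c.
Proof.
move=> c_neq0; rewrite lt_def l1norm_ge0 andbT l1norm_col.
apply: contra c_neq0 => /eqP sum0; apply/eqP/matrixP => i j; rewrite ord1 mxE.
by apply/normr0_eq0/(psumr_eq0P _ sum0).
Qed.

Lemma qform_ge Z c : (forall i j, `|Z i j| <= 1) -> - l1norm c ^+ 2 <= qform Z c.
Proof.
move=> Z_le1; rewrite qformE l1norm_col expr2 mulr_suml -sumrN; apply: ler_sum => i _.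
rewrite mulr_sumr -sumrN; apply: ler_sum => j _; rewrite lerNl; apply: le_trans (ler_norm _) _.
by rewrite normrN !normrM; apply: ler_piMl (Z_le1 i j); rewrite mulr_ge0.
Qed.

Lemma qformB Z v us :
  qform Z v - qform Z us = \sum_i \sum_j Z i j * (v *m v^T - us *m us^T) i j.
Proof.
rewrite !qformE -sumrB; apply: eq_bigr => i _; rewrite -sumrB.
by apply: eq_bigr => j _; rewrite outer_diffE; ring.
Qed.

Lemma fobj_ge_qform Z us v : (forall i j, `|Z i j| <= 1) ->
  2^-1 * (qform Z v - qform Z us) <= fobj us v.
Proof.
move=> Z_le1; rewrite qformB ler_wpM2l ?invr_ge0 ?ler0n //.
apply: ler_sum => i _; apply: ler_sum => j _.
by apply: le_trans (ler_norm _) _; rewrite normrM; apply: ler_piMl (normr_ge0 _) (Z_le1 i j).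
Qed.

Lemma normrB_dominated (a b z : R) : `|b| <= `|a| -> z * a = - `|a| ->
  `|b - a| = z * (b - a).
Proof.
rewrite ler_norml => /andP[b_ge b_le] za; have [a0|a0|a0] := ltgtP a 0.
- rewrite ltr0_norm ?opprK // in b_ge b_le za.
  have -> : z = 1 by apply: (mulIf (ltr0_neq0 a0)); rewrite mul1r.
  by rewrite mul1r ger0_norm // subr_ge0.
- rewrite gtr0_norm // in b_ge b_le za.
  have -> : z = -1 by apply: (mulIf (lt0r_neq0 a0)); rewrite mulN1r.
  by rewrite mulN1r ler0_norm // subr_le0.
- rewrite a0 normr0 oppr0 in b_ge b_le *.
  have -> : b = 0 by lra.
  by rewrite addr0 normr0 mulr0.
Qed.

Lemma fobj_qform Z us v :
  (forall i j, Z i j * (us i 0 * us j 0) = - `|us i 0 * us j 0|) ->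
  (forall i, `|v i 0| <= `|us i 0|) ->
  fobj us v = 2^-1 * (qform Z v - qform Z us).
Proof.
move=> Zus v_le; rewrite qformB; congr (_ * _); apply: eq_bigr => i _.
apply: eq_bigr => j _; rewrite outer_diffE; apply: normrB_dominated (Zus i j).
by rewrite !normrM ler_pM.
Qed.

End Objective.

Section SecondSubderivative.
Context {R : realType} {n : nat}.
Implicit Types (g : 'cV[R]_n -> R) (x v w : 'cV[R]_n).

(* [second_subderiv g x v w] unfolds to the liminf of this quotient. *)
Definition diffquot2 g x v w (t : R) : R :=
  (g (x + t *: w) - g x - t * (v^T *m w) 0 0) / (t ^+ 2 / 2).

Lemma diffquot2_0 g x w t : diffquot2 g x 0 w t = (g (x + t *: w) - g x) / (t ^+ 2 / 2).
Proof. by rewrite /diffquot2 trmx0 mul0mx mxE mulr0 subr0. Qed.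

Lemma second_subderiv_le {g x v w} (c : R) :
  (forall t, 0 < t <= 1 -> diffquot2 g x v w t <= c) ->
  (second_subderiv g x v w <= c%:E)%E.
Proof.
move=> dq_le; apply: ge_ereal_sup => _ [d d_gt0 <-].
pose t := Num.min d 1 / 2.
have t_gt0 : 0 < t by rewrite divr_gt0 // lt_min d_gt0 ltr01.
have t_le_min : t < Num.min d 1 by rewrite ltr_pdivrMr // ltr_pMr ?ltr1n // lt_min d_gt0 ltr01.
have [t_lt_d t_lt1] : t < d /\ t < 1.
  by move: t_le_min; rewrite lt_min => /andP[].
apply: (@le_trans _ _ (diffquot2 g x v w t)%:E).
  apply: ereal_inf_lbound; exists (t, w) => //=.
  by split=> [|i]; rewrite ?t_gt0 ?t_lt_d // subrr normr0.
by rewrite lee_fin dq_le // t_gt0 (ltW t_lt1).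
Qed.

Lemma second_subderiv_ge {g x v w} (c K : R) :
  (forall d t w', 0 < d <= 1 -> 0 < t < d -> (forall i, `|w' i 0 - w i 0| < d) ->
     c - K * d <= diffquot2 g x v w' t) ->
  (c%:E <= second_subderiv g x v w)%E.
Proof.
move=> dq_ge; apply/lee_addgt0Pr => e e_gt0.
pose d := Num.min 1 (e / (`|K| + 1)).
have K1_gt0 : 0 < `|K| + 1 by rewrite ltr_wpDl.
have d_gt0 : 0 < d by rewrite lt_min ltr01 divr_gt0.
have d_le1 : d <= 1 by rewrite ge_min lexx.
have Kd_le : K * d <= e.
  have : d <= e / (`|K| + 1) by rewrite ge_min lexx orbT.
  rewrite ler_pdivlMr // => de; have := ler_norm K; nra.
rewrite -leeBlDr // -EFinB.
apply: le_trans; last by apply: ereal_sup_ubound; exists d.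
apply/ereal_infP => _ [[t w'] /= [/andP[t_gt0 t_lt_d] w'_near] <-].
rewrite lee_fin; apply: le_trans (dq_ge d t w' _ _ w'_near); last 2 first.
- by rewrite d_gt0.
- by rewrite t_gt0.
by rewrite lerD2l lerN2.
Qed.

End SecondSubderivative.

Section SpuriousStationaryPoint.
Context {R : realType} {n : nat} {us u : 'cV[R]_n} {Z : 'M[R]_n}.
Hypothesis Zsym : Z^T = Z.
Hypothesis ZSign : forall i j, Sign ((u *m u^T - us *m us^T) i j) (Z i j).
Hypothesis Zu : Z *m u = 0.

Lemma Z_symE i j : Z i j = Z j i.
Proof. by rewrite -[in LHS]Zsym mxE. Qed.

Lemma Z_rowE i : \sum_j Z i j * u j 0 = 0.
Proof. by have /matrixP/(_ i 0) := Zu; rewrite !mxE. Qed.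

Lemma Z_SignE i j : Sign (u i 0 * u j 0 - us i 0 * us j 0) (Z i j).
Proof. by rewrite -outer_diffE. Qed.

Lemma Z_norm_le1 i j : `|Z i j| <= 1.
Proof. exact: Sign_norm_le1 (ZSign i j). Qed.

Lemma stationary_supp i : us i 0 = 0 -> u i 0 = 0.
Proof.
move=> us_i0; have row0 : \sum_j `|u i 0 * u j 0| = 0.
  transitivity (u i 0 * \sum_j Z i j * u j 0); last by rewrite Z_rowE mulr0.
  rewrite mulr_sumr; apply: eq_bigr => j _.
  by have := Sign_mulr (Z_SignE i j); rewrite us_i0 mul0r subr0 => <-; ring.
have /eqP := @psumr_eq0P _ _ _ _ (fun j _ => normr_ge0 _) row0 i isT.
by rewrite normr_eq0 mulf_eq0 orbb => /eqP.
Qed.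

Let supp i := us i 0 != 0.
Let ratio i := u i 0 / us i 0.
Let Y i j := Z i j * (Num.sg (us i 0) * Num.sg (us j 0)).

Lemma ratio_sign_compatible : sign_compatible supp Y ratio.
Proof.
move=> i j supp_i supp_j; rewrite /Y -sgrM; apply: Sign_mulr_sg; first exact: mulf_neq0.
have -> : us i 0 * us j 0 * (ratio i * ratio j - 1) = u i 0 * u j 0 - us i 0 * us j 0.
  by rewrite /ratio; field; apply/andP.
exact: Z_SignE.
Qed.

Lemma ratio_balanced_rows : balanced_rows supp (fun i => `|us i 0|) Y ratio.
Proof.
move=> i supp_i; transitivity (Num.sg (us i 0) * \sum_j Z i j * u j 0); last first.
  by rewrite Z_rowE mulr0.
rewrite mulr_sumr [RHS](bigID supp) /= [X in _ = _ + X]big1 ?addr0; last first.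
  by move=> j /negPn/eqP/stationary_supp->; rewrite !mulr0.
apply: eq_bigr => j supp_j.
have uj : Num.sg (us j 0) * (`|us j 0| * ratio j) = u j 0.
  by rewrite mulrA -numEsg mulrC divfK.
by rewrite -[u j 0 in RHS]uj /Y; ring.
Qed.

Hypotheses (u_neq : u <> us) (u_neqN : u <> - us).

Lemma spurious_Z_us i j : Z i j * (us i 0 * us j 0) = - `|us i 0 * us j 0|.
Proof.
have Y_N1 : forall k l, supp k -> supp l -> Y k l = -1.
  apply: (balanced_Y_eqN1 supp (fun k => `|us k 0|) Y _ _ ratio
            ratio_sign_compatible ratio_balanced_rows).
  - by move=> k; rewrite normr_gt0.
  - by move=> k l; rewrite /Y Z_symE [Num.sg _ * _]mulrC.
  - move=> all1; apply: u_neq; apply/matrixP => k l; rewrite ord1.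
    have [us_k0|supp_k] := eqVneq (us k 0) 0; first by rewrite us_k0 stationary_supp.
    by rewrite -[u k 0](divfK supp_k) -/(ratio k) all1 ?mul1r.
  - move=> allN1; apply: u_neqN; apply/matrixP => k l; rewrite ord1 mxE.
    have [us_k0|supp_k] := eqVneq (us k 0) 0; first by rewrite us_k0 stationary_supp ?oppr0.
    by rewrite -[u k 0](divfK supp_k) -/(ratio k) allN1 ?mulN1r.
have [us_i0|supp_i] := eqVneq (us i 0) 0; first by rewrite us_i0 !(mul0r, mulr0) normr0 oppr0.
have [us_j0|supp_j] := eqVneq (us j 0) 0; first by rewrite us_j0 !mulr0 normr0 oppr0.
rewrite [us i 0 in LHS]numEsg [us j 0 in LHS]numEsg normrM -mulN1r -(Y_N1 i j) //.
by rewrite /Y; ring.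
Qed.

Lemma spurious_norm_le i : `|u i 0| <= `|us i 0|.
Proof.
have [us_i0|supp_i] := eqVneq (us i 0) 0; first by rewrite us_i0 stationary_supp.
have Z_ii : Z i i = -1.
  apply: (mulIf (mulf_neq0 supp_i supp_i)).
  by rewrite spurious_Z_us mulN1r ger0_norm // -expr2 sqr_ge0.
have := Z_SignE i i; rewrite Z_ii => /SignN1_le0; rewrite subr_le0 -!expr2 => sqr_le.
by rewrite -ler_sqr ?nnegrE ?normr_ge0 // !real_normK ?num_real.
Qed.

Lemma qform_us : qform Z us = - l1norm us ^+ 2.
Proof.
rewrite qformE l1norm_col expr2 mulr_suml -sumrN; apply: eq_bigr => i _.
rewrite mulr_sumr -sumrN; apply: eq_bigr => j _.
by rewrite spurious_Z_us normrM.
Qed.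

Lemma fobj_at_u : fobj us u = 2^-1 * l1norm us ^+ 2.
Proof.
rewrite (fobj_qform Z us u spurious_Z_us spurious_norm_le) qform_ker // qform_us.
by rewrite sub0r opprK.
Qed.

Lemma diffquot2_segment {s t : R} : `|s| = 1 -> 0 < t <= 1 ->
  diffquot2 (fobj us) u 0 (s *: us - u) t = - l1norm us ^+ 2.
Proof.
move=> s_norm /andP[t_gt0 t_le1]; set v := u + t *: (s *: us - u).
have v_le i : `|v i 0| <= `|us i 0|.
  have -> : v i 0 = (1 - t) * u i 0 + t * (s * us i 0) by rewrite !mxE; ring.
  apply: le_trans (ler_normD _ _) _; rewrite !normrM s_norm mul1r.
  rewrite (gtr0_norm t_gt0) ger0_norm ?subr_ge0 //.
  by have := spurious_norm_le i; nra.
have qform_v : qform Z v = - t ^+ 2 * l1norm us ^+ 2.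
  have s_sqr : s ^+ 2 = 1 by rewrite -real_normK ?num_real // s_norm expr1n.
  rewrite /v (qform_shift Z u _ Zsym Zu) qformZ -(qform_shift Z u _ Zsym Zu).
  by rewrite addrC subrK qformZ qform_us s_sqr mul1r mulrN mulNr.
rewrite diffquot2_0 (fobj_qform Z us v spurious_Z_us v_le) fobj_at_u qform_v qform_us.
by field; rewrite gt_eqF.
Qed.


Lemma diffquot2_ge {s d t : R} {w' : 'cV[R]_n} : `|s| = 1 -> 0 < t ->
  (forall i, `|w' i 0 - (s *: us - u) i 0| < d) ->
  - (l1norm us + n%:R * d) ^+ 2 <= diffquot2 (fobj us) u 0 w' t.
Proof.
move=> s_norm t_gt0 w'_near.
have l1_le : l1norm (u + w') <= l1norm us + n%:R * d.
  have -> : n%:R * d = \sum_(i < n) d by rewrite sumr_const card_ord mulr_natl.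
  rewrite !l1norm_col -big_split; apply: ler_sum => i _.
  have -> : (u + w') i 0 = s * us i 0 + (w' i 0 - (s *: us - u) i 0) by rewrite !mxE; ring.
  by apply: le_trans (ler_normD _ _) _; rewrite normrM s_norm mul1r lerD2l ltW.
have qform_le : - t ^+ 2 * (l1norm us + n%:R * d) ^+ 2 <= qform Z (u + t *: w').
  rewrite (qform_shift Z u _ Zsym Zu) qformZ -(qform_shift Z u _ Zsym Zu).
  rewrite mulNr -mulrN ler_wpM2l ?sqr_ge0 //; apply: le_trans (qform_ge _ _ Z_norm_le1).
  rewrite lerN2 ler_sqr ?nnegrE ?l1norm_ge0 //; exact: le_trans (l1norm_ge0 _) l1_le.
have := fobj_ge_qform Z us (u + t *: w') Z_norm_le1; rewrite qform_us => fobj_ge.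
rewrite diffquot2_0 ler_pdivlMr ?divr_gt0 ?exprn_gt0 // fobj_at_u; lra.
Qed.

End SpuriousStationaryPoint.

Theorem theorem2 (R : realType) (n : nat) (us u : 'cV[R]_n) :
  us != 0 -> spurious_stationary us u ->
  forall w : 'cV[R]_n, w = us - u \/ w = - us - u ->
    second_subderiv (fobj us) u 0 w = (- (l1norm us) ^+ 2)%:E /\
    - (l1norm us) ^+ 2 < 0.
Proof.
move=> us_neq0 [[Z [Zsym ZSign] Zu] [u_neq u_neqN]] w w_def.
have [s [s_norm ->]] : exists s : R, `|s| = 1 /\ w = s *: us - u.
  by case: w_def => ->; [exists 1; rewrite normr1 scale1r | exists (-1); rewrite normrN1 scaleN1r].
have L_gt0 : 0 < l1norm us := l1norm_gt0 _ us_neq0.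
split; last by rewrite oppr_lt0 exprn_gt0.
apply/eqP; rewrite eq_le; apply/andP; split.
  apply: second_subderiv_le => t t01.
  by rewrite (diffquot2_segment Zsym ZSign Zu u_neq u_neqN s_norm t01).
apply: (second_subderiv_ge _ (n%:R * (2 * l1norm us + n%:R))).
move=> d t w' /andP[d_gt0 d_le1] /andP[t_gt0 _] w'_near.
apply: le_trans (diffquot2_ge Zsym ZSign Zu u_neq u_neqN s_norm t_gt0 w'_near).
have sqr_d_le : d ^+ 2 <= d by rewrite expr2; apply: ler_piMl (ltW d_gt0) d_le1.
have : n%:R ^+ 2 * d ^+ 2 <= n%:R ^+ 2 * d by rewrite ler_wpM2l ?sqr_ge0.
lra.
Qed.
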